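(* Let $X$ be a subspace of $\beta\omega$ with $\omega\subseteq X$. If $\operatorname{CL}(X)$ is pseudocompact, then $X^\kappa$ is pseudocompact for every cardinal $\kappa$.
   Context: $\beta\omega$ is the Stone–Čech compactification of the discrete space $\omega$. Powers carry the product topology. $\operatorname{CL}(X)$ is the set of nonempty closed subsets of $X$ with the Vietoris topology; pseudocompact means every continuous real-valued function is bounded. *)

From HB Require Import structures.
From mathcomp Require Import all_boot all_order all_algebra.
From mathcomp Require Import all_classical all_reals all_analysis.
From mathcomp Require Import Rstruct Rstruct_topology.
Set Implicit Arguments. Unset Strict Implicit. Unset Printing Implicit Defensive.
Import Order.TTheory GRing.Theory Num.Theory.
Local Open Scope classical_set_scope.
Local Open Scope ring_scope.

(** beta omega: the Stone-Cech compactification of the discrete space omega,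
    realized (as usual) as the space of ultrafilters on nat, with the
    topology generated by the basic clopen sets  A^* = {p | A \in p}. *)
Definition betaomega : Type := {F : set_system nat | UltraFilter F}.
HB.instance Definition _ := gen_eqMixin betaomega.
HB.instance Definition _ := gen_choiceMixin betaomega.

Definition bw_basic (A : set nat) : set betaomega :=
  [set p | (sval p) A].

HB.instance Definition _ := isSubBaseTopological.Build betaomega
  (@setT (set nat)) bw_basic.

(** the point n of omega inside betaomega is the principal ultrafilter at n *)
Definition is_principal_at (p : betaomega) (n : nat) : Prop :=
  forall A : set nat, sval p A <-> A n.

(** CL(X): nonempty closed subsets of X, with the Vietoris topology,
    generated by the subbasic sets <U>^+ = {F | F <= U} and
    <U>^- = {F | F meets U}, for U open in X. *)
Definition CL (X : topologicalType) : Type :=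
  {F : set X | closed F /\ F !=set0}.
HB.instance Definition _ (X : topologicalType) := gen_eqMixin (CL X).
HB.instance Definition _ (X : topologicalType) := gen_choiceMixin (CL X).

Definition vietoris_subbase (X : topologicalType) (i : bool * set X) : set (CL X) :=
  if i.1 then [set F | sval F `<=` i.2]
  else [set F | sval F `&` i.2 !=set0].

HB.instance Definition _ (X : topologicalType) :=
  isSubBaseTopological.Build (CL X)
    [set i : bool * set X | open i.2] (@vietoris_subbase X).

Definition pseudocompact (T : topologicalType) : Prop :=
  forall f : T -> Rdefinitions.R, continuous f -> exists M : Rdefinitions.R, forall x : T, `|f x| <= M.

Definition power (X : topologicalType) (I : Type) : topologicalType :=
  prod_topology (fun _ : I => X).

From HB Require Import structures.
From mathcomp Require Import all_boot all_order all_algebra.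
From mathcomp Require Import all_classical all_reals all_analysis.
From mathcomp Require Import finmap Rstruct Rstruct_topology lra.
Set Implicit Arguments. Unset Strict Implicit. Unset Printing Implicit Defensive.
Import Order.TTheory GRing.Theory Num.Theory.
Local Open Scope classical_set_scope.

(* Since omega is dense in X, the finitely supported points of omega^kappa are
   dense in X^kappa, so it suffices that every sequence of such points has a
   cluster point.  Such a sequence involves only countably many coordinate
   functions g_j : omega -> omega, hence it is enough that every sequence
   n |-> (g_j(n))_j of omega^omega clusters in X^omega.
   Fix an ultrafilter w on omega extending the cofinite filter and choose
   stages n_t >= t such that, among the g_j with j <= t, those constant on a
   w-large set take that constant value at n_t, w-equivalent ones agree at n_t,
   and the least representatives of the other w-classes (the primary indices)
   take pairwise distinct values at n_t that were never taken by a primary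
   g_k at an earlier stage.  The finite sets E_t = {g_j(n_t) : j <= t primary}
   are then distinct isolated points of CL(X) with closed singletons, so by
   pseudocompactness of CL(X) they have a cluster point A; points of A lying
   in the closures of the tails {g_j(n_s) : s >= j} give the cluster point of
   (g_j(n))_j. *)

(** * Filters, sequences and pseudocompactness *)

Lemma filter_forall_leq (T : Type) (F : set_system T) {FF : Filter F} (t : nat)
    (P : nat -> set T) :
  (forall j, (j <= t)%N -> F (P j)) -> F [set x | forall j, (j <= t)%N -> P j x].
Proof.
move=> FP; have := filter_forall FF (fun i : 'I_t.+1 => FP i (ltn_ord i)).
by apply: filterS => x Px j jt; exact: (Px (Ordinal (jt : (j < t.+1)%N))).
Qed.

Lemma filter_forall_In (T I : Type) (F : set_system T) {FF : Filter F} (s : seq I)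
    (P : I -> set T) :
  (forall i, List.In i s -> F (P i)) -> F [set x | forall i, List.In i s -> P i x].
Proof.
elim: s => [|a s IHs] FP; first by apply: filterS filterT => x _ i [].
have Fs := IHs (fun i si => FP i (or_intror si)).
apply: filterS (filterI (FP a (or_introl erefl)) Fs) => x [Pa Ps] i /= [<- //|].
exact: Ps.
Qed.

Lemma In_leq_sumn (J : seq nat) j : List.In j J -> (j <= sumn J)%N.
Proof.
elim: J => //= a J IHJ [<-|/IHJ jJ]; first exact: leq_addr.
exact: leq_trans jJ (leq_addl _ _).
Qed.

Lemma cluster_seqP (T : topologicalType) (u : nat -> T) (p : T) :
  cluster (u @ \oo) p <-> forall N, nbhs p N -> forall m, exists n, (m <= n)%N /\ N (u n).
Proof.
split=> [cup N pN m|clu A N [m _ uA] pN].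
  have uT : (u @ \oo) (u @` [set n | (m <= n)%N]) by exists m => // n mn; exists n.
  by have [_ [[n mn <-] Nun]] := cup _ N uT pN; exists n.
have [n [mn Nun]] := clu N pN m.
by exists (u n); split => //; exact: uA.
Qed.

Lemma cluster_comp (T U : topologicalType) (f : T -> U) (u : nat -> T) (p : T) :
  {for p, continuous f} -> cluster (u @ \oo) p -> cluster ((f \o u) @ \oo) (f p).
Proof.
move=> fp /cluster_seqP up; apply/cluster_seqP => N /fp fN m.
exact: up fN m.
Qed.

Section Pseudocompact.
Local Open Scope ring_scope.
Variable T : topologicalType.

Lemma pseudocompact_dense_cluster (D : set T) : dense D ->
    (forall u : nat -> T, (forall n, D (u n)) -> exists p, cluster (u @ \oo) p) ->
  pseudocompact T.
Proof.
move=> Ddense Dclu f fc; apply: contrapT => unbounded.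
have /choice[u uP] n : exists d, D d /\ n%:R < `|f d|.
  have [x nx] : exists x, n%:R + 1 < `|f x|.
    apply: contrapT => small; apply: unbounded; exists (n%:R + 1) => x.
    by rewrite leNgt; apply/negP => xn; apply: small; exists x.
  have near_x : nbhs x (f @^-1` ball (f x) 1) by apply: fc; exact: nbhsx_ballx.
  have [d [xd Dd]] := Ddense _ (ex_intro _ x near_x) (@open_interior _ _).
  exists d; split => //; have {}xd : `|f x - f d| < 1 := interior_subset xd.
  by have := ler_normD (f x - f d) (f d); rewrite subrK; lra.
have [p /cluster_seqP p_cluster] := Dclu u (fun n => (uP n).1).
set b := Num.bound (`|f p| + 1).
have [n [bn pn]] := p_cluster _ (fc p _ (nbhsx_ballx (f p) 1 ltr01)) b.
have fpn : `|f p| + 1 < n%:R.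
  by apply: lt_le_trans (archi_boundP _) _; [exact: addr_ge0 | rewrite ler_nat].
have {}pn : `|f (u n) - f p| < 1 by rewrite distrC; exact: pn.
by have := ler_normD (f (u n) - f p) (f p); rewrite subrK; have := (uP n).2; lra.
Qed.

(* Otherwise [e t |-> t], extended by [0], is continuous and unbounded. *)
Lemma pseudocompact_cluster_isolated (e : nat -> T) :
  pseudocompact T -> injective e -> (forall t, nbhs (e t) [set e t]) ->
  (forall t, closed [set e t]) -> exists p, cluster (e @ \oo) p.
Proof.
move=> pcT e_inj e_iso e_closed; apply: contrapT => noclu.
pose f x : Rdefinitions.R :=
  if pselect (exists t, x = e t) is left H then (projT1 (cid H))%:R else 0.
have fe t : f (e t) = t%:R.
  rewrite /f; case: pselect => [H|[]]; last by exists t.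
  by case: cid => s /= /e_inj ->.
have f_locally_constant x : nbhs x [set y | f y = f x].
  case: (pselect (exists t, x = e t)) => [[t ->]|nx].
    by apply: filterS (e_iso t) => y ->.
  have [N [m [xN Nm]]] : exists N m, nbhs x N /\ forall n, (m <= n)%N -> ~ N (e n).
    apply: contrapT => H; apply: noclu; exists x; apply/cluster_seqP => N xN m.
    apply: contrapT => nm; apply: H; exists N, m; split => // n mn Nn.
    by apply: nm; exists n.
  have away : nbhs x [set y | forall t, (t <= m)%N -> y <> e t].
    apply: filter_forall_leq => t _; apply: open_nbhs_nbhs.
    by split; [exact: (closed_openC (e_closed t)) | move=> xe; apply: nx; exists t].
  have fx0 : f x = 0 by rewrite /f; case: (pselect (exists t, x = e t)).
  apply: filterS (filterI xN away) => y [Ny yaway] /=; rewrite fx0 /f.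
  case: pselect => // -[t yt]; exfalso.
  have [tm|mt] := leqP t m; first exact: yaway t tm yt.
  by apply: Nm (ltnW mt) _; rewrite -yt.
have fc : continuous f.
  by move=> x U /= /nbhs_singleton fxU; apply: filterS (f_locally_constant x) => y /= ->.
have [M fM] := pcT f fc.
have M0 : 0 <= M := le_trans (normr_ge0 _) (fM (e 0%N)).
by have := fM (e (Num.bound M)); rewrite fe normr_nat leNgt archi_boundP.
Qed.

End Pseudocompact.

(** * The Vietoris topology *)

Section Vietoris.
Variable Y : topologicalType.
Implicit Types (A F G : CL Y) (U : set Y).

Lemma CL_ext F G : sval F = sval G -> F = G.
Proof. by case: F G => [A pA] [B pB] /= AB; exact: eq_exist. Qed.

Lemma open_vietoris_subbase (i : bool * set Y) : open i.2 -> open (vietoris_subbase i).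
Proof.
move=> oi; exists [set vietoris_subbase i]; last by rewrite bigcup_set1.
by move=> _ ->; exact: finI_from1.
Qed.

Lemma nbhs_CL_sub A U : open U -> sval A `<=` U -> nbhs A [set F | sval F `<=` U].
Proof.
move=> oU AU; apply: open_nbhs_nbhs; split => //.
exact: (@open_vietoris_subbase (true, U)).
Qed.

Lemma nbhs_CL_meet A U : open U -> sval A `&` U !=set0 ->
  nbhs A [set F | sval F `&` U !=set0].
Proof.
move=> oU AU; apply: open_nbhs_nbhs; split => //.
exact: (@open_vietoris_subbase (false, U)).
Qed.

Lemma CL_isolated G : finite_set (sval G) -> (forall y, sval G y -> open [set y]) ->
  nbhs G [set G].
Proof.
move=> /finite_fsetP[B GB] Gopen.
have Gsub : nbhs G [set F | sval F `<=` sval G].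
  apply: nbhs_CL_sub => //.
  have -> : sval G = \bigcup_(y in sval G) [set y] by rewrite bigcup_imset1 image_id.
  by apply: bigcup_open => y; exact: Gopen.
have Gmeet : nbhs G (\bigcap_(y in [set` B]) [set F | sval F `&` [set y] !=set0]).
  apply: filter_bigI => y yB; have Gy : sval G y by rewrite GB.
  by apply: nbhs_CL_meet; [exact: Gopen | exists y].
apply: filterS (filterI Gsub Gmeet) => F [FG FGy] /=; apply: CL_ext.
apply/seteqP; split => // y Gy; rewrite GB in Gy.
by have [z [Fz <-]] := FGy y Gy.
Qed.

Lemma CL_closed_set1 G : (forall y, sval G y -> closed [set y]) -> closed [set G].
Proof.
move=> Gclosed; rewrite -openC openE => A /= AG.
case: (pselect (sval A `<=` sval G)) => [AsubG|/existsNP[x /not_implyP[Ax Gx]]].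
  have [y Gy Ay] : exists2 y, sval G y & ~ sval A y.
    apply: contrapT => /forall2NP AeqG; apply: AG; apply: CL_ext.
    by apply/seteqP; split => // y Gy; case: (AeqG y) => // /contrapT.
  apply: filterS (nbhs_CL_sub (closed_openC (Gclosed y Gy)) _) => [F FGy FG|z Az zy].
    by apply: (FGy y) => //; rewrite FG.
  by apply: Ay; rewrite -zy.
apply: filterS (nbhs_CL_meet (closed_openC (proj2_sig G).1) _) => [F [z [Fz Gz]] FG|].
  by apply: Gz; rewrite -FG.
by exists x.
Qed.

End Vietoris.

(** * Powers *)

Lemma power_nbhs_box (Y : topologicalType) (K : Type) (x : power Y K)
    (N : set (power Y K)) :
  nbhs x N -> exists (s : seq K) (V : K -> set Y), (forall c, nbhs (x c) (V c)) /\
    forall z : power Y K, (forall c, List.In c s -> V c (z c)) -> N z.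
Proof.
move=> [B [oB Bx] BN]; move: oB => [D Dsub DB]; rewrite -DB in Bx BN.
have [S DS Sx] := Bx; have [E Esub ES] := Dsub _ DS.
suff [s [V [Vx sVE]]] : exists (s : seq K) (V : K -> set Y),
    (forall c, nbhs (x c) (V c)) /\
    forall z, (forall c, List.In c s -> V c (z c)) -> forall P, P \in enum_fset E -> P z.
  exists s, V; split => // z /sVE zE; apply: BN; exists S => //.
  have zS : (\bigcap_(P in [set` E]) P) z by move=> P PE; exact: zE.
  by rewrite -ES.
have : forall P, P \in enum_fset E -> P x by move: Sx; rewrite -ES => Sx P PE; exact: Sx.
have : forall P, P \in enum_fset E -> exists c U, open U /\ P = (fun f => f c) @^-1` U.
  by move=> P /Esub /set_mem [c _ [U oU <-]]; exists c, U.
elim: (enum_fset E) => [|P L IHL] Lsub Lx.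
  by exists nil, (fun _ => setT); split => // c; exact: filterT.
have [||s [V [Vx sVL]]] := IHL.
- by move=> Q QL; apply: Lsub; rewrite in_cons QL orbT.
- by move=> Q QL; apply: Lx; rewrite in_cons QL orbT.
have [c [U [oU eP]]] := Lsub P (mem_head _ _).
have xU : U (x c) by have := Lx P (mem_head _ _); rewrite eP.
exists (c :: s), (fun d => if pselect (d = c) then V d `&` U else V d); split.
  move=> d; case: pselect => [dc|_] //; subst d.
  by apply: filterI => //; exact: open_nbhs_nbhs.
move=> z zV Q; rewrite in_cons => /orP [/eqP ->|QL].
  by rewrite eP; have := zV c (or_introl erefl); case: pselect => // _ [].
by apply: sVL => // d ds; have := zV d (or_intror ds); case: pselect => // _ [].
Qed.

Lemma continuous_precomp (Y : topologicalType) (I : eqType) (K : Type) (h : K -> I) :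
  continuous (fun z : power Y I => (z \o h : power Y K)).
Proof.
move=> y N /power_nbhs_box[s [V [Vy sVN]]].
have : nbhs y [set z : power Y I | forall c, List.In c s -> V c (z (h c))].
  apply: filter_forall_In => c _.
  exact: (@proj_continuous I (fun _ => Y) (h c) y _ (Vy c)).
by apply: filterS => z zV; exact: sVN.
Qed.

Lemma cluster_precomp (Y : topologicalType) (I : eqType) (K : Type) (h : K -> I)
    (v : nat -> power Y I) (y : power Y I) :
  cluster (v @ \oo) y -> cluster ((fun n => (v n \o h : power Y K)) @ \oo) (y \o h).
Proof. exact: cluster_comp (@continuous_precomp Y I K h y). Qed.

Definition finsupp (K : Type) (m : K -> nat) :=
  exists s : seq K, forall c, ~ List.In c s -> m c = 0%N.

(* Index [0] is reserved for the zero row; index [j.+1] stands for the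
   coordinate [coord j], the [k]-th point of the support of [m n] when
   [j] pickles [(n, k)]. *)
Lemma finsupp_seq_factor (K : Type) (m : nat -> K -> nat) :
  (forall n, finsupp (m n)) ->
  exists (g : nat -> nat -> nat) (idx : K -> nat), forall n c, m n c = g (idx c) n.
Proof.
move=> /choice[s ms].
pose coord j : option K :=
  if choice.unpickle j is Some (n, k) then List.nth_error (s n) k else None.
pose idx c :=
  if pselect (exists j, coord j = Some c) is left H then (projT1 (cid H)).+1 else 0%N.
exists (fun j n => if j is j'.+1 then (if coord j' is Some c then m n c else 0%N) else 0%N).
exists idx => n c; rewrite /idx; case: pselect => [H|unused]; first by case: cid => j /= ->.
apply: contrapT => mnc; apply: unused.
have cs : List.In c (s n) by apply: contrapT => ncs; exact: mnc (ms n c ncs).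
have [k nck] := List.In_nth_error _ _ cs.
by exists (choice.pickle (n, k)); rewrite /coord choice.pickleK.
Qed.

(** * omega inside beta omega *)

Definition pt (n : nat) : betaomega :=
  exist _ (principal_filter n) (principal_filter_ultra n).

Lemma pt_principal_at n : is_principal_at (pt n) n.
Proof. by move=> A; exact: principal_filterP. Qed.

Lemma betaomega_eq_pt (p : betaomega) (m : nat) : sval p [set m] -> p = pt m.
Proof.
case: p => F UF /= Fm; apply: eq_exist.
apply/funext => B; apply/propext; rewrite principal_filterP; split.
  by move=> FB; have [k [-> //]] := filter_ex (filterI Fm FB).
by move=> Bm; apply: filterS Fm => k ->.
Qed.

Lemma open_bw_basic (A : set nat) : open (bw_basic A).
Proof.
exists [set bw_basic A]; last by rewrite bigcup_set1.
by move=> _ ->; exact: finI_from1.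
Qed.

Lemma bw_basic_nbhs (U : set betaomega) (p : betaomega) :
  open U -> U p -> exists2 A, sval p A & bw_basic A `<=` U.
Proof.
move=> [D Dsub <-] [S DS Sp]; have [E Esub ES] := Dsub _ DS; rewrite -ES in Sp.
have UF : UltraFilter (sval p) := svalP p.
exists (\bigcap_(A in [set` E]) A); first by apply: filter_bigI => A AE; exact: Sp.
move=> q EAq; have UFq : UltraFilter (sval q) := svalP q.
have Sq : (\bigcap_(A in [set` E]) bw_basic A) q.
  by move=> A AE; apply: filterS EAq => m; exact.
by exists S => //; rewrite -ES.
Qed.

Section OmegaInX.
Variable X : set betaomega.
Hypothesis omegaX : forall n, X (pt n).
Local Notation XT := (set_type X).

Definition ptX (n : nat) : XT := exist _ (pt n) (mem_set (omegaX n)).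

Definition bw_trace (A : set nat) : set XT := [set x | sval (sval x) A].

Lemma open_bw_trace A : open (bw_trace A).
Proof. by exists (bw_basic A) => //; exact: open_bw_basic. Qed.

Lemma bw_traceC A : ~` bw_trace A = bw_trace (~` A).
Proof.
apply/seteqP; split => x /=; have UF : UltraFilter (sval (sval x)) := svalP (sval x).
  by case: (in_ultra_setVsetC A UF).
move=> nA pA; have : sval (sval x) (A `&` ~` A) by exact: filterI.
by rewrite setICr; exact: filter_not_empty.
Qed.

Lemma closed_bw_trace A : closed (bw_trace A).
Proof. by rewrite -[bw_trace A]setCK bw_traceC; exact/open_closedC/open_bw_trace. Qed.

Lemma bw_trace_ptX n A : bw_trace A (ptX n) <-> A n.
Proof. exact: principal_filterP. Qed.

Lemma bw_trace1 m : bw_trace [set m] = [set ptX m].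
Proof.
apply/seteqP; split => [x /betaomega_eq_pt xm|_ ->]; last exact/bw_trace_ptX.
exact: val_inj.
Qed.

Lemma ptX_inj : injective ptX.
Proof.
move=> a b ab; have /bw_trace_ptX // : bw_trace [set a] (ptX b).
by rewrite -ab; exact/bw_trace_ptX.
Qed.

Lemma open_ptX1 m : open [set ptX m].
Proof. by rewrite -bw_trace1; exact: open_bw_trace. Qed.

Lemma closed_ptX1 m : closed [set ptX m].
Proof. by rewrite -bw_trace1; exact: closed_bw_trace. Qed.

Lemma nbhs_bw_trace (x : XT) (W : set XT) : nbhs x W ->
  exists2 A, sval (sval x) A & bw_trace A `<=` W.
Proof.
move=> [U [[B oB <-] Bx UW]]; have [A xA AB] := bw_basic_nbhs oB Bx.
by exists A => // y yA; apply: UW; exact: AB.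
Qed.

Lemma nbhs_ptX (x : XT) (W : set XT) : nbhs x W -> exists m, W (ptX m).
Proof.
move=> /nbhs_bw_trace[A xA AW]; have UF : UltraFilter (sval (sval x)) := svalP (sval x).
by have [m Am] := filter_ex xA; exists m; apply: AW; exact/bw_trace_ptX.
Qed.

Definition finsupp_omega (K : Type) : set (power XT K) := [set ptX \o m | m in @finsupp K].

Lemma dense_finsupp_omega (K : Type) : dense (@finsupp_omega K).
Proof.
move=> U [x Ux] oU.
have [s [V [Vx sVU]]] := power_nbhs_box (open_nbhs_nbhs (conj oU Ux)).
have /choice[m mV] c : exists m, V c (ptX m) by exact: nbhs_ptX (Vx c).
pose m' c := if pselect (List.In c s) then m c else 0%N.
exists (ptX \o m'); split.
  by apply: sVU => c cs; rewrite /= /m'; case: pselect.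
by exists m' => //; exists s => c cs; rewrite /m'; case: pselect.
Qed.

End OmegaInX.

(** * Classes of a countable family of sequences modulo an ultrafilter *)

Section UltrafilterClasses.
Variables (g : nat -> nat -> nat) (w : set_system nat).
Hypothesis w_ultra : UltraFilter w.

Definition w_const j := exists c, w [set n | g j n = c].

Definition w_value j : nat :=
  if pselect (w_const j) is left H then projT1 (cid H) else 0%N.

Lemma w_valueP j : w_const j -> w [set n | g j n = w_value j].
Proof. by rewrite /w_value; case: pselect => // H _; case: cid. Qed.

Definition w_eq j k := w [set n | g j n = g k n].

Lemma w_eq_refl j : w_eq j j.
Proof. by apply: filterS filterT. Qed.

Lemma w_eq_sym j k : w_eq j k -> w_eq k j.
Proof. by apply: filterS => n /= ->. Qed.

Lemma w_eq_trans j k l : w_eq j k -> w_eq k l -> w_eq j l.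
Proof. by move=> jk kl; apply: filterS (filterI jk kl) => n [/= -> ->]. Qed.

Definition w_rep j : nat :=
  ex_minn (ex_intro (fun k => `[< w_eq j k >]) j (asboolT (w_eq_refl j))).

Lemma w_repP j : w_eq j (w_rep j) /\ forall k, w_eq j k -> (w_rep j <= k)%N.
Proof.
rewrite /w_rep; case: ex_minnP => r /asboolP jr rmin.
by split => // k jk; apply: rmin; exact/asboolP.
Qed.

Lemma w_rep_idem j : w_rep (w_rep j) = w_rep j.
Proof.
have [jr rmin] := w_repP j; have [rr rrmin] := w_repP (w_rep j).
have le1 := rrmin _ (w_eq_refl (w_rep j)).
have le2 := rmin _ (w_eq_trans jr rr).
by apply/eqP; rewrite eqn_leq le1 le2.
Qed.

Definition primary j := ~ w_const j /\ w_rep j = j.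

Lemma primary_rep j : ~ w_const j -> primary (w_rep j).
Proof.
move=> nc; split; last exact: w_rep_idem.
move=> [c rc]; apply: nc; exists c.
by apply: filterS (filterI (w_repP j).1 rc) => n [/= -> ->].
Qed.

Lemma primary_w_neq j k : primary j -> primary k -> j <> k -> w [set n | g j n <> g k n].
Proof.
move=> [_ rj] [_ rk] jk.
case: (in_ultra_setVsetC [set n | g j n = g k n] w_ultra) => // ejk; exfalso; apply: jk.
apply/eqP; rewrite eqn_leq -{1}rj -{2}rk.
by rewrite (w_repP j).2 // (w_repP k).2 //; exact: w_eq_sym.
Qed.

Lemma primary_w_avoid j m : primary j -> w [set n | g j n <> m].
Proof.
move=> [nc _]; case: (in_ultra_setVsetC [set n | g j n = m] w_ultra) => // jm.
by exfalso; apply: nc; exists m.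
Qed.

End UltrafilterClasses.

(** * The cluster point in X^omega *)

Section PowerOmegaCluster.
Variables (g : nat -> nat -> nat) (w : set_system nat).
Hypotheses (w_ultra : UltraFilter w) (w_cofinite : forall m, w [set n | (m <= n)%N]).
Hypothesis g0 : forall n, g 0%N n = n.

Local Notation w_const := (w_const g w).
Local Notation w_value := (w_value g w).
Local Notation w_rep := (w_rep g w_ultra).
Local Notation primary := (primary g w_ultra).

Lemma primary0 : primary 0%N.
Proof.
split; last by apply/eqP; rewrite -leqn0 (w_repP g w_ultra 0%N).2 //; exact: w_eq_refl.
move=> [c c0]; have [n [/= n_c cn]] := filter_ex (filterI c0 (w_cofinite c.+1)).
by move: cn; rewrite -n_c g0 ltnn.
Qed.

Definition admissible (prev : seq nat) (n : nat) := let t := size prev in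
  [/\ (t <= n)%N,
      forall j, (j <= t)%N -> w_const j -> g j n = w_value j,
      forall j, (j <= t)%N -> ~ w_const j -> g j n = g (w_rep j) n,
      forall j, (j <= t)%N -> forall k, (k <= t)%N ->
        primary j -> primary k -> j <> k -> g j n <> g k n &
      forall j, (j <= t)%N -> forall s, (s <= t)%N -> forall k, (k <= s)%N ->
        (s < t)%N -> primary j -> primary k -> g j n <> g k (nth 0%N prev s)].

Lemma admissible_w prev : w (admissible prev).
Proof.
set t := size prev.
have const_w : w [set n | forall j, (j <= t)%N -> w_const j -> g j n = w_value j].
  by apply: filter_forall_leq => j _; apply: filter_imply; exact: w_valueP.
have rep_w : w [set n | forall j, (j <= t)%N -> ~ w_const j -> g j n = g (w_rep j) n].
  apply: filter_forall_leq => j _; apply: filter_imply => _.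
  exact: (w_repP g w_ultra j).1.
have neq_w : w [set n | forall j, (j <= t)%N -> forall k, (k <= t)%N ->
    primary j -> primary k -> j <> k -> g j n <> g k n].
  apply: filter_forall_leq => j _; apply: filter_forall_leq => k _.
  apply: filter_imply => pj; apply: filter_imply => pk; apply: filter_imply => jk.
  exact: primary_w_neq.
have avoid_w : w [set n | forall j, (j <= t)%N -> forall s, (s <= t)%N ->
    forall k, (k <= s)%N -> (s < t)%N -> primary j -> primary k ->
    g j n <> g k (nth 0%N prev s)].
  apply: filter_forall_leq => j _; apply: filter_forall_leq => s _.
  apply: filter_forall_leq => k _; apply: filter_imply => _.
  apply: filter_imply => pj; apply: filter_imply => _.
  exact: primary_w_avoid.
apply: filterS (filterI (w_cofinite t)
  (filterI const_w (filterI rep_w (filterI neq_w avoid_w)))).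
by move=> n [tn [cn [rn [nn an]]]]; split.
Qed.

Definition next_stage (prev : seq nat) : nat :=
  projT1 (cid (filter_ex (admissible_w prev))).

Fixpoint stages (t : nat) : seq nat :=
  if t is t'.+1 then rcons (stages t') (next_stage (stages t')) else [::].

Definition stage (t : nat) : nat := next_stage (stages t).

Lemma size_stages t : size (stages t) = t.
Proof. by elim: t => //= t IHt; rewrite size_rcons IHt. Qed.

Lemma nth_stages t s : (s < t)%N -> nth 0%N (stages t) s = stage s.
Proof.
elim: t => // t IHt; rewrite ltnS leq_eqVlt => /orP[/eqP ->|st] /=.
  by rewrite nth_rcons size_stages ltnn eqxx.
by rewrite nth_rcons size_stages st IHt.
Qed.

Lemma stageP t : admissible (stages t) (stage t).
Proof. by rewrite /stage /next_stage; case: cid. Qed.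

Lemma leq_stage t : (t <= stage t)%N.
Proof. by have [+ _ _ _ _] := stageP t; rewrite size_stages. Qed.

Lemma stage_const j t : (j <= t)%N -> w_const j -> g j (stage t) = w_value j.
Proof. by have [_ + _ _ _] := stageP t; rewrite size_stages; apply. Qed.

Lemma stage_rep j t : (j <= t)%N -> ~ w_const j -> g j (stage t) = g (w_rep j) (stage t).
Proof. by have [_ _ + _ _] := stageP t; rewrite size_stages; apply. Qed.

Lemma stage_primary_inj j k t s : primary j -> primary k -> (j <= t)%N -> (k <= s)%N ->
  g j (stage t) = g k (stage s) -> j = k /\ t = s.
Proof.
move=> pj pk jt ks e.
have avoid u v a b : primary a -> primary b -> (a <= u)%N -> (b <= v)%N -> (v < u)%N ->
    g a (stage u) <> g b (stage v).
  move=> pa pb au bv vu; have [_ _ _ _] := stageP u; rewrite size_stages => h.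
  by rewrite -(nth_stages vu); apply: h => //; exact: ltnW.
have [ts|st|ts] := ltngtP t s.
- by exfalso; apply: (avoid s t k j) => //; rewrite e.
- by exfalso; apply: (avoid t s j k).
- subst s; split => //; apply: contrapT => jk.
  have [_ _ _ + _] := stageP t; rewrite size_stages => h.
  exact: (h j jt k ks pj pk jk e).
Qed.

Variable X : set betaomega.
Hypothesis omegaX : forall n, X (pt n).
Hypothesis pcCL : pseudocompact (CL (set_type X)).
Local Notation XT := (set_type X).
Local Notation ptX := (ptX omegaX).
Local Notation bw_trace := (@bw_trace X).

Definition level (t : nat) : set XT :=
  [set ptX (g j (stage t)) | j in [set j | (j <= t)%N /\ primary j]].

Lemma finite_level_indices t : finite_set [set j | (j <= t)%N /\ primary j].
Proof.
by apply: (@sub_finite_set _ _ `I_t.+1) => [j [jt _]|]; [exact: jt | exact: finite_II].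
Qed.

Lemma level_stage t : level t (ptX (stage t)).
Proof. by exists 0%N; [split=> //; exact: primary0 | rewrite g0]. Qed.

Lemma closed_level t : closed (level t).
Proof.
rewrite /level -bigcup_imset1; apply: closed_bigcup => [|j _]; last exact: closed_ptX1.
exact: finite_level_indices.
Qed.

Definition levelCL (t : nat) : CL XT :=
  exist _ (level t) (conj (@closed_level t) (ex_intro _ _ (level_stage t))).

Lemma levelCL_inj : injective levelCL.
Proof.
move=> t s /(congr1 sval) /= ts; have := level_stage t; rewrite ts.
move=> [k [ks pk] /ptX_inj e].
have e0 : g 0%N (stage t) = g k (stage s) by rewrite g0 e.
by have [] := stage_primary_inj primary0 pk (leq0n t) ks e0.
Qed.

Lemma levelCL_cluster : exists A, cluster (levelCL @ \oo) A.
Proof.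
apply: pseudocompact_cluster_isolated pcCL levelCL_inj _ _ => t.
  apply: CL_isolated; first exact/finite_image/finite_level_indices.
  by move=> _ [j _ <-]; exact: open_ptX1.
by apply: CL_closed_set1 => _ [j _ <-]; exact: closed_ptX1.
Qed.

Definition trail (j : nat) : set nat := [set g j (stage s) | s in [set s | (j <= s)%N]].

Variable A : CL XT.
Hypothesis A_cluster : cluster (levelCL @ \oo) A.

Lemma cluster_meets_trail j : primary j -> exists2 x, sval A x & bw_trace (trail j) x.
Proof.
move=> pj; apply: contrapT => nA.
have Asub : sval A `<=` ~` bw_trace (trail j) by move=> x Ax tx; apply: nA; exists x.
have Anbhs := nbhs_CL_sub (closed_openC (closed_bw_trace (X := X) (A := trail j))) Asub.
have [t [jt /= sub]] := (cluster_seqP _ _).1 A_cluster _ Anbhs j.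
apply: (sub (ptX (g j (stage t)))); first by exists j.
by apply/bw_trace_ptX; exists t.
Qed.

Lemma cluster_rows :
  exists y : power XT nat, cluster ((fun n => (fun j => ptX (g j n)) : power XT nat) @ \oo) y.
Proof.
have /choice[a aP] j : exists a : XT, primary j -> sval A a /\ bw_trace (trail j) a.
  have [/cluster_meets_trail[x Ax tx]|npj] := pselect (primary j); first by exists x.
  by exists (ptX 0%N).
pose y j := if pselect (w_const j) then ptX (w_value j) else a (w_rep j).
have yC j : w_const j -> y j = ptX (w_value j) by rewrite /y; case: pselect.
have yN j : ~ w_const j -> y j = a (w_rep j) by rewrite /y; case: pselect.
exists y; apply/cluster_seqP => B /power_nbhs_box[J [W [Wy JWB]]] m.
pose meetW j := [set F : CL XT | ~ w_const j ->
  sval F `&` ((W j)° `&` bw_trace (trail (w_rep j))) !=set0].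
have A_meetW : nbhs A [set F | forall j, List.In j J -> meetW j F].
  apply: filter_forall_In => j _; rewrite /meetW.
  apply: (@filter_imply _ _ _ (nbhs A)) => nc.
  apply: nbhs_CL_meet; first by apply: openI; [exact: open_interior | exact: open_bw_trace].
  have [Aa ta] := aP _ (primary_rep w_ultra nc).
  exists (a (w_rep j)); split => //; split => //.
  by rewrite -yN //; exact: Wy.
have [t [mt Wt]] := (cluster_seqP _ _).1 A_cluster _ A_meetW (m + sumn J).
exists (stage t); split.
  by apply: leq_trans (leq_stage t); exact: leq_trans (leq_addr _ _) mt.
apply: JWB => j jJ; have jt : (j <= t)%N.
  by apply: leq_trans mt; apply: leq_trans (leq_addl m _); exact: In_leq_sumn.
have [cj|nc] := pselect (w_const j).
  by rewrite /= stage_const // -yC //; exact: nbhs_singleton (Wy j).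
(* the point of [levelCL t] near [y j] is [g (w_rep j) (stage t)] *)
have [_ [[k [kt pk] <-] [/interior_subset Wk /bw_trace_ptX[s rs e]]]] := Wt j jJ nc.
have [kr _] := stage_primary_inj pk (primary_rep w_ultra nc) kt rs (esym e).
by rewrite /= stage_rep // -kr.
Qed.

End PowerOmegaCluster.

Lemma omega_rows_cluster (X : set betaomega) (omegaX : forall n, X (pt n)) :
  pseudocompact (CL (set_type X)) -> forall g : nat -> nat -> nat,
  exists y : power (set_type X) nat,
    cluster ((fun n => (fun j => ptX omegaX (g j n)) : power _ nat) @ \oo) y.
Proof.
move=> pcCL g; have [w [w_ultra cofin]] := ultraFilterLemma (F := \oo) _.
have w_cofinite m : w [set n | (m <= n)%N] by apply: cofin; exists m.
pose h j n := if j is j'.+1 then g j' n else n.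
have [A A_cluster] :=
  levelCL_cluster (g := h) w_ultra w_cofinite (fun n => erefl) omegaX pcCL.
have [y y_cluster] := cluster_rows A_cluster.
by exists (y \o succn); exact: (@cluster_precomp _ _ nat succn _ _ y_cluster).
Qed.

Theorem corollary4p2 (X : set betaomega) :
  (forall (p : betaomega) (n : nat), is_principal_at p n -> X p) ->
  pseudocompact (CL (set_type X)) ->
  forall kappa : Type, pseudocompact (power (set_type X) kappa).
Proof.
move=> hX pcCL K.
have omegaX n : X (pt n) := hX _ n (pt_principal_at n).
apply: (pseudocompact_dense_cluster (@dense_finsupp_omega X omegaX K)) => u uD.
have /choice[m mP] n : exists m : K -> nat, finsupp m /\ ptX omegaX \o m = u n.
  by have [m ? ?] := uD n; exists m.
have [g [idx gidx]] := finsupp_seq_factor (fun n => (mP n).1).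
have [y y_cluster] := omega_rows_cluster omegaX pcCL g.
have -> : u = fun n => (fun j => ptX omegaX (g j n)) \o idx.
  by apply/funext => n; rewrite -(mP n).2; apply/funext => c /=; rewrite gidx.
by exists (y \o idx); exact: cluster_precomp y_cluster.
Qed.
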